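(* Let $p>2$ be a prime and let $V'=\{\mathbf{v}\in\{\pm1\}^{4p} : \mathbf{v}_{4p}=1,\ \sum_{i=1}^{4p}\mathbf{v}_i=0\}$. If $S\subseteq V'$ contains no two (distinct) vectors $\mathbf{u},\mathbf{v}$ with $\langle\mathbf{u},\mathbf{v}\rangle=0$, then $|S|\le \sum_{k=0}^{p-1}\binom{4p}{k}\le 2\binom{4p}{p-1}$.
   Context: $\langle\cdot,\cdot\rangle$ is the standard inner product on $\mathbb{R}^{4p}$. *)

From mathcomp Require Import all_boot all_order all_algebra.
Set Implicit Arguments. Unset Strict Implicit. Unset Printing Implicit Defensive.
Import Order.TTheory GRing.Theory Num.Theory.
Local Open Scope ring_scope.

Definition dotv (n : nat) (u v : 'rV[int]_n) : int := \sum_(i < n) u 0 i * v 0 i.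

Definition inVprime (p : nat) (v : 'rV[int]_(4 * p)) : Prop :=
  (forall i : 'I_(4 * p), v 0 i = 1 \/ v 0 i = -1) /\
  (forall i : 'I_(4 * p), nat_of_ord i = (4 * p).-1 -> v 0 i = 1) /\
  \sum_(i < 4 * p) v 0 i = 0.

From mathcomp Require Import all_boot all_order all_algebra.
From mathcomp Require Import zify ring.
Import Order.TTheory GRing.Theory Num.Theory.
Set Implicit Arguments. Unset Strict Implicit. Unset Printing Implicit Defensive.
Local Open Scope ring_scope.

(* Encode [v] in V' by the set [P v] of its [+1] coordinates: [#|P v| = 2p], [P v]
   contains the last index, and [<u, v> = 4 (#|P u :&: P v| - p)].  Dropping the
   last index leaves sets [W v] of size [2p - 1].  Over F_p, the inclusion matrix [A]
   of the [W v] (v in S) against all (p-1)-subsets of the coordinates satisfies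
   [(A A^T) u v = 'C(#|W u :&: W v|, p - 1)], and by Lucas' theorem this is [1] for
   [u = v] (size [2p - 1]) and [0] for all other sizes [c <= 2p - 2], [c <> p - 1],
   i.e. whenever [<u, v> <> 0].  So [A A^T = 1] and [|S| <= rank A <= 'C(4p, p - 1)]. *)

Section SignVectors.
Variable n : nat.
Implicit Types u v : 'rV[int]_n.

Definition sign_vector v := forall i, v 0 i = 1 \/ v 0 i = -1.

Definition pos_coords v : {set 'I_n} := [set i | v 0 i == 1].

Lemma sign_vector_entryE v i : sign_vector v ->
  v 0 i = 2 * (i \in pos_coords v)%:R - 1.
Proof. by move/(_ i); rewrite inE; case=> ->. Qed.

Lemma sum_indicator (A : {set 'I_n}) : \sum_i ((i \in A)%:R : int) = #|A|%:R.
Proof.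
rewrite (eq_bigr (fun i => if i \in A then 1 else 0)) -?big_mkcond ?sumr_const //.
by move=> i _; case: (i \in A).
Qed.

Lemma sum_sign_vector v : sign_vector v ->
  \sum_i v 0 i = 2 * #|pos_coords v|%:R - n%:R.
Proof.
move=> sv; rewrite (eq_bigr _ (fun i _ => sign_vector_entryE i sv)).
by rewrite sumrB -mulr_sumr sum_indicator sumr_const card_ord.
Qed.

Lemma dotv_sign_vector u v : sign_vector u -> sign_vector v ->
  dotv u v = 4 * #|pos_coords u :&: pos_coords v|%:R
             - 2 * #|pos_coords u|%:R - 2 * #|pos_coords v|%:R + n%:R.
Proof.
move=> su sv; rewrite /dotv (eq_bigr (fun i => 4 * (i \in pos_coords u :&: pos_coords v)%:R
   - 2 * (i \in pos_coords u)%:R - 2 * (i \in pos_coords v)%:R + 1)); last first.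
  move=> i _; rewrite (sign_vector_entryE i su) (sign_vector_entryE i sv) in_setI.
  by case: (i \in pos_coords u); case: (i \in pos_coords v); rewrite /=; ring.
by rewrite big_split /= !sumrB -!mulr_sumr !sum_indicator sumr_const card_ord.
Qed.

Lemma pos_coords_inj u v : sign_vector u -> sign_vector v ->
  pos_coords u = pos_coords v -> u = v.
Proof.
move=> su sv e; apply/rowP => i.
by rewrite (sign_vector_entryE i su) (sign_vector_entryE i sv) e.
Qed.

End SignVectors.

Section PrimedVectors.
Variable p : nat.
Implicit Types u v : 'rV[int]_(4 * p).

Lemma card_pos_coords_Vprime v : inVprime v -> #|pos_coords v| = (2 * p)%N.
Proof.
case=> sv [_]; rewrite sum_sign_vector // => /eqP; rewrite subr_eq0 => /eqP sumE.
apply/eqP; rewrite -(eqr_nat int) natrM; apply/eqP/(@mulfI _ 2) => //.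
by rewrite sumE natrM; ring.
Qed.

Lemma dotv_Vprime_eq0 u v : inVprime u -> inVprime v ->
  (dotv u v == 0) = (#|pos_coords u :&: pos_coords v| == p).
Proof.
move=> Vu Vv; rewrite (dotv_sign_vector (proj1 Vu) (proj1 Vv)).
rewrite !card_pos_coords_Vprime // !natrM.
have -> : forall c : int, 4 * c - 2 * (2%:R * p%:R) - 2 * (2%:R * p%:R) + 4%:R * p%:R
  = 4 * (c - p%:R) by move=> c; ring.
by rewrite mulf_eq0 /= subr_eq0 eqr_nat.
Qed.

Lemma card_pos_coords_capVprime_lt u v : inVprime u -> inVprime v -> u != v ->
  (#|pos_coords u :&: pos_coords v| < 2 * p)%N.
Proof.
move=> Vu Vv; apply: contraNT; rewrite -leqNgt => le2p.
have capE w : inVprime w -> pos_coords u :&: pos_coords v \subset pos_coords w ->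
  pos_coords u :&: pos_coords v = pos_coords w.
  by move=> Vw sub; apply/eqP; rewrite eqEcard sub card_pos_coords_Vprime.
apply/eqP; apply: (pos_coords_inj (proj1 Vu) (proj1 Vv)).
by rewrite -(capE u Vu (subsetIl _ _)) (capE v Vv (subsetIr _ _)).
Qed.

Lemma last_in_pos_coords_Vprime v (i : 'I_(4 * p)) :
  inVprime v -> val i = (4 * p).-1 -> i \in pos_coords v.
Proof. by case=> _ [lastE _] /lastE; rewrite inE => ->. Qed.

End PrimedVectors.

Section BinomialsModPrime.
Variable p : nat.
Hypothesis p_pr : prime p.

Lemma fact_pred_Fp : (p.-1)`!%:R = -1 :> 'F_p.
Proof.
have /dvdnP[k] : (p %| (p.-1)`!.+1)%N by rewrite -Wilson ?prime_gt1.
move/(congr1 (fun m => m%:R : 'F_p)).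
rewrite natrM pchar_Fp_0 // mulr0 -[(p.-1)`!.+1]addn1 natrD.
by move/eqP; rewrite addr_eq0 => /eqP.
Qed.

Lemma ffact_addp_Fp j m : ((p + j) ^_ m)%:R = (j ^_ m)%:R :> 'F_p.
Proof.
elim: m j => [|m IH] [|j]; rewrite ?ffactn0 // !ffactnS !natrM natrD pchar_Fp_0 // add0r.
  by rewrite !mul0r.
by rewrite addnS IH.
Qed.

Lemma bin_addp_pred_Fp j : 'C(p + j, p.-1)%:R = 'C(j, p.-1)%:R :> 'F_p.
Proof.
apply: (@mulIf _ (p.-1)`!%:R); first by rewrite fact_pred_Fp oppr_eq0 oner_neq0.
by rewrite -!natrM !bin_ffact ffact_addp_Fp.
Qed.

Lemma bin_pred_Fp c : (c < 2 * p)%N ->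
  'C(c, p.-1)%:R = ((c == p.-1) || (c == (2 * p).-1))%:R :> 'F_p.
Proof.
have p_gt1 := prime_gt1 p_pr; move=> lt_c2p.
have [lt_cp | le_pc] := ltnP c p.
  have [->|ne] := eqVneq c p.-1; first by rewrite binn.
  have ne2 : c != (2 * p).-1 by lia.
  by rewrite bin_small ?(negbTE ne2) //; lia.
rewrite -(subnKC le_pc) bin_addp_pred_Fp.
set j := (c - p)%N.
have [->|ne] := eqVneq j p.-1.
  have -> : (p + p.-1 = (2 * p).-1)%N by lia.
  by rewrite binn eqxx orbT.
have ne1 : p + j != p.-1 by lia.
have ne2 : p + j != (2 * p).-1 by lia.
by rewrite bin_small ?(negbTE ne1) ?(negbTE ne2) //; lia.
Qed.

End BinomialsModPrime.

Section InclusionMatrix.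
Variables (R : nzRingType) (T : finType) (k : nat).

Definition ksubsets : {set {set T}} := [set A : {set T} | #|A| == k].

Definition incl_mx (F : seq {set T}) : 'M[R]_(size F, #|ksubsets|) :=
  \matrix_(i, j) (@enum_val _ (pred_of_set ksubsets) j \subset nth set0 F i)%:R.

Lemma incl_mx_mul_tr F i j :
  (incl_mx F *m (incl_mx F)^T) i j = 'C(#|nth set0 F i :&: nth set0 F j|, k)%:R.
Proof.
set X := nth set0 F i :&: nth set0 F j.
transitivity (\sum_(A in ksubsets) ((A \subset X)%:R : R)); last first.
  rewrite -natr_sum -cards_draws -sum1_card; congr (_%:R).
  rewrite [LHS]big_mkcond [RHS]big_mkcond; apply: eq_bigr => A _.
  by rewrite !inE; case: (A \subset X); case: (#|A| == k).
rewrite (big_enum_val (A := pred_of_set ksubsets)).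
rewrite mxE; apply: eq_bigr => l _; rewrite !mxE subsetI.
by case: (_ \subset _); case: (_ \subset _); rewrite ?mulr1 ?mulr0.
Qed.

End InclusionMatrix.

Lemma bin_pred_card_cap_Vprime_Fp p (u v : 'rV[int]_(4 * p)) : prime p ->
  inVprime u -> inVprime v -> (u != v -> dotv u v != 0) ->
  'C(#|pos_coords u :&: pos_coords v|.-1, p.-1)%:R = (u == v)%:R :> 'F_p.
Proof.
move=> p_pr Vu Vv nonorth; have p_gt1 := prime_gt1 p_pr.
have [<- | neq_uv] := eqVneq u v.
  rewrite setIid card_pos_coords_Vprime // bin_pred_Fp ?eqxx ?orbT //; lia.
have := nonorth neq_uv; rewrite dotv_Vprime_eq0 // => ne_p.
have := card_pos_coords_capVprime_lt Vu Vv neq_uv.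
move: #|pos_coords u :&: pos_coords v| ne_p => c ne_p lt_c2p.
have ne1 : c.-1 != p.-1 by lia.
have ne2 : c.-1 != (2 * p).-1 by lia.
by rewrite bin_pred_Fp ?(negbTE ne1) ?(negbTE ne2) //; lia.
Qed.

Lemma size_nonorthogonal_Vprime p (S : seq 'rV[int]_(4 * p)) : prime p ->
  uniq S -> {in S, forall v, inVprime v} ->
  {in S &, forall u v, u != v -> dotv u v != 0} ->
  (size S <= 'C(4 * p, p.-1))%N.
Proof.
move=> p_pr S_uniq S_Vprime S_nonorth.
have lt_last : ((4 * p).-1 < 4 * p)%N by have := prime_gt0 p_pr; lia.
pose x0 := Ordinal lt_last.
pose F := [seq pos_coords v :\ x0 | v <- S].
have card_capF u v : u \in S -> v \in S ->
    #|(pos_coords u :\ x0) :&: (pos_coords v :\ x0)| = #|pos_coords u :&: pos_coords v|.-1.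
  move=> /S_Vprime Vu /S_Vprime Vv; rewrite -setDIl (cardsD1 x0 (_ :&: _)) inE.
  by rewrite !last_in_pos_coords_Vprime.
have : incl_mx 'F_p p.-1 F *m (incl_mx 'F_p p.-1 F)^T = 1%:M.
  apply/matrixP => i j; rewrite incl_mx_mul_tr mxE.
  have [lt_iS lt_jS] : (i < size S)%N /\ (j < size S)%N.
    by rewrite -(size_map (fun v => pos_coords v :\ x0)).
  rewrite !(nth_map 0) // card_capF ?mem_nth // -val_eqE -(nth_uniq 0 lt_iS lt_jS S_uniq).
  have [Si Sj] := (mem_nth 0 lt_iS, mem_nth 0 lt_jS).
  exact: bin_pred_card_cap_Vprime_Fp (S_Vprime _ Si) (S_Vprime _ Sj) (S_nonorth _ _ Si Sj).
by move/mulmx1_min; rewrite size_map card_draws card_ord.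
Qed.

Lemma sum_bin_le_2bin n m : (3 * m <= n.+1)%N ->
  (\sum_(0 <= k < m.+1) 'C(n, k) <= 2 * 'C(n, m))%N.
Proof.
elim: m => [|m IH] le_3m; first by rewrite big_nat1 bin0.
have le_bin : (2 * 'C(n, m) <= 'C(n, m.+1))%N.
  rewrite -(leq_pmul2l (ltn0Sn m)) mul_bin_left mulnA leq_mul //; lia.
rewrite big_nat_recr //=; have := IH ltac:(lia); lia.
Qed.

Theorem mainTheorem4 (p : nat) (hp : prime p) (hp2 : (2 < p)%N)
  (S : seq 'rV[int]_(4 * p)) (huniq : uniq S)
  (hS : forall v, v \in S -> inVprime v)
  (horth : forall u v, u \in S -> v \in S -> u != v -> dotv u v != 0) :
  (size S <= \sum_(0 <= k < p) 'C(4 * p, k))%N /\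
  (\sum_(0 <= k < p) 'C(4 * p, k) <= 2 * 'C(4 * p, p.-1))%N.
Proof.
have -> : (\sum_(0 <= k < p) 'C(4 * p, k) = \sum_(0 <= k < p.-1.+1) 'C(4 * p, k))%N.
  by rewrite prednK ?prime_gt0.
split; last by apply: sum_bin_le_2bin; lia.
apply: leq_trans (size_nonorthogonal_Vprime hp huniq hS horth) _.
by rewrite big_nat_recr //= leq_addl.
Qed.
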